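(* The height function of a shrub is determined by its fraction: if $P$ and $P'$ are shrubs on the same finite set $I$ with $f_P=f_{P'}$, then $h_P=h_{P'}$.
   Context: A shrub $P$ on a finite set $I$ is a set $E$ of edges (unordered pairs of distinct elements of $I$) with a height function $h_P:I\to\mathbb{N}$; $j$ covers $i$ if $\{i,j\}\in E$ and $h_P(j)=h_P(i)+1$. Axioms: (1) edges join vertices whose heights differ by $1$; (2) every vertex of positive height covers some vertex; (3) no four distinct $a,b,c,d$ with $a$ covering $b$ and $c$, $c$ covering $d$, $\{b,d\}\notin E$; (4) no five distinct $a,b,c,d,e$ with $a$ covering $c,d$, $b$ covering $d,e$, $\{a,e\}\notin E$, $\{b,c\}\notin E$. A vertex is ramified if it covers at least two distinct vertices; two ramified vertices are equivalent if they cover the same set of vertices; $\operatorname{Ram}(P)$ is the set of equivalence classes, and for $r\in\operatorname{Ram}(P)$, $r^-$ is the common set of vertices covered by elements of $r$. For $S\subseteq I$, $\langle S\rangle_P$ is the set of $j\in I$ such that every descending path from $j$ (each vertex covering the next) to a vertex of height $0$ meets $S$. $P\setminus\langle r\rangle_P$ is the restriction of $P$ to $I\setminus\langle r\rangle_P$. With $u[S]=\sum_{k\in S}u_k$, $$f_P=\frac{1}{\prod_{i\in I}u[\langle\{i\}\rangle_P]}\prod_{r\in\operatorname{Ram}(P)}\frac{u[\langle r^-\rangle_{P\setminus\langle r\rangle_P}]}{u[\langle r^-\rangle_P]}\in\mathbb{Q}(u_i:i\in I).$$ *)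

From mathcomp Require Import all_boot all_algebra.
From mathcomp Require Import mpoly.
From mathcomp Require Import fraction.

Set Implicit Arguments.
Unset Strict Implicit.
Unset Printing Implicit Defensive.

Import GRing.Theory.
Local Open Scope ring_scope.

Section Shrub.
Variable I : finType.

(* A shrub on I: an edge relation E (edges = unordered pairs of distinct
   elements, encoded as a symmetric irreflexive relation) and a height h. *)
Variables (E : rel I) (h : I -> nat).

Definition covers (j i : I) : bool := E i j && (h j == (h i).+1)%N.

Definition is_shrub : Prop :=
  [/\ (forall i j, E i j = E j i) /\ (forall i, ~~ E i i),
   (forall i j, E i j -> (h j == (h i).+1)%N || (h i == (h j).+1)%N),
   (forall j, (0 < h j)%N -> exists i, covers j i),
   (forall a b c d, uniq [:: a; b; c; d] ->
                covers a b -> covers a c -> covers c d -> E b d) &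
   (forall a b c d e, uniq [:: a; b; c; d; e] ->
                covers a c -> covers a d -> covers b d -> covers b e ->
                E a e \/ E b c)].

Definition down (j : I) : {set I} := [set i | covers j i].

Definition ramified (j : I) : bool := (1 < #|down j|)%N.

Definition Ram : {set {set I}} :=
  [set [set k | ramified k & down k == down j] | j in [set j | ramified j]].

(* r^- : the common set of vertices covered by the elements of r *)
Definition rminus (r : {set I}) : {set I} := \bigcup_(j in r) down j.

(* <S> in the restriction of P to D: the j in D such that every descending
   path (each vertex covering the next) inside D from j to a vertex of height
   0 meets S.  Such a path from j has exactly h j steps, since each step
   lowers the height by one. *)
Definition closure_in (D S : {set I}) : {set I} :=
  [set j in D | [forall p : (h j).-tuple I,
     (path covers j p && all (mem D) p && (h (last j p) == 0)%N)
       ==> has (mem S) (j :: p)]].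

Definition closure (S : {set I}) : {set I} := closure_in setT S.

Definition ratfun := {fraction {mpoly rat[#|I|]}}.

Definition uvar (k : I) : ratfun := tofrac ('X_(enum_rank k) : {mpoly rat[#|I|]}).

Definition usum (S : {set I}) : ratfun := \sum_(k in S) uvar k.

Definition fP : ratfun :=
  (\prod_(i : I) (usum (closure [set i]))^-1) *
  \prod_(r in Ram) (usum (closure_in (~: closure r) (rminus r)) /
                    usum (closure (rminus r))).

End Shrub.

(* Specialize u_k to X and every other u_i to 1: a factor u[S] becomes X + (#|S| - 1)
   if k is in S and the nonzero constant #|S| otherwise, so f_P becomes a quotient of
   polynomials whose degree drop counts the i with k in <{i}>, plus the r in Ram(P)
   with k in <r^->_P but not in <r^->_{P \ <r>}.  Since <r> is contained in <r^->,
   the latter are exactly the r with k in <r>.  Going down from {k} one level at a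
   time, the vertices of a level cover a common set (axiom (3)), and each level L is
   accounted for exactly once: by {y} if L = {y}, and otherwise by the class of the
   ramified vertices covering L.  Hence the drop is h(k) + 1. *)

From Pilot Require Import Defs.
From mathcomp Require Import all_boot all_algebra.
From mathcomp Require Import mpoly.
From mathcomp Require Import fraction.
From mathcomp Require Import zify.

Set Implicit Arguments.
Unset Strict Implicit.
Unset Printing Implicit Defensive.

Import GRing.Theory Num.Theory.

Lemma sum_subset1 (T : finType) (X : {set T}) : X != set0 ->
  (\sum_(i : T) (X \subset [set i]) = (#|X| == 1))%N.
Proof.
move=> X0; case: cards1P => [[x ->]|not1].
  rewrite (bigD1 x) //= sub1set in_set1 eqxx big1 // => i /negbTE.
  by rewrite sub1set in_set1 eq_sym => ->.
rewrite big1 // => i _; rewrite subset1 (negbTE X0) orbF.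
by case: eqP => // XE; case: not1; exists i.
Qed.

Section Closure.
Variables (I : finType) (E : rel I) (h : I -> nat).

Local Notation covers := (covers E h).
Local Notation down := (down E h).
Local Notation closure_in := (closure_in E h).
Local Notation closure := (Defs.closure E h).

Lemma covers_height x y : covers x y -> h x = (h y).+1.
Proof. by case/andP=> _ /eqP. Qed.

Lemma mem_down x y : (y \in down x) = covers x y.
Proof. by rewrite inE. Qed.

Lemma height_ind (P : I -> Prop) :
  (forall x, (forall y, covers x y -> P y) -> P x) -> forall x, P x.
Proof.
move=> IH x; move: {-1}(h x) (leqnn (h x)) => n; elim: n x => [|n IHn] x.
  move=> hx0; apply: IH => y /covers_height; move: hx0; lia.
move=> hx; apply: IH => y /covers_height hxy; apply: IHn; lia.
Qed.

Lemma closure_inE D S x : x \in closure_in D S <-> x \in D /\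
  (forall s, size s = h x -> path covers x s -> all (mem D) s ->
     h (last x s) = 0%N -> has (mem S) (x :: s)).
Proof.
rewrite inE; split=> [/andP[xD /forallP descS] | [xD descS]].
  split=> // s sz_s x_s s_D /eqP last0.
  move/implyP: (descS (Tuple (introT eqP sz_s))); apply.
  by rewrite /= x_s s_D last0.
rewrite xD; apply/forallP=> s; apply/implyP=> /andP[/andP[x_s s_D] /eqP last0].
exact: descS (size_tuple s) x_s s_D last0.
Qed.

Lemma closure_inP D S x : x \in closure_in D S <-> x \in D /\
  (x \in S \/ (0 < h x /\ forall y, covers x y -> y \in D -> y \in closure_in D S))%N.
Proof.
split=> [/closure_inE[xD descS] | [xD [xS | [hx0 cov_cl]]]].
- split=> //; case xS: (x \in S); [by left | right; split].
    case hx: (h x) => [|n] //.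
    by have := descS [::] (esym hx) isT isT hx; rewrite /= xS.
  move=> y xy yD; apply/closure_inE; split=> // s sz_s y_s s_D last0.
  have := descS (y :: s); rewrite /= xS xy yD; apply=> //.
  by rewrite sz_s (covers_height xy).
- by apply/closure_inE; split=> // s *; rewrite /= xS.
apply/closure_inE; split=> // -[|y s] /= sz_s; first by rewrite -sz_s in hx0.
case/andP=> xy y_s /andP[yD s_D] last0.
have [_ descS] := (closure_inE D S y).1 (cov_cl y xy yD).
have sz_s' : size s = h y by move: sz_s; rewrite (covers_height xy) => -[].
by move: (descS s sz_s' y_s s_D last0) => /= ->; rewrite orbT.
Qed.

Lemma closureP S x : x \in closure S <->
  (x \in S \/ (0 < h x /\ forall y, covers x y -> y \in closure S))%N.
Proof.
rewrite /closure closure_inP in_setT; split=> [[_ [xS | [hx0 cl_y]]] | [xS | [hx0 cl_y]]].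
- by left.
- by right; split=> // y xy; apply: cl_y.
- by split=> //; left.
by split=> //; right; split=> // y xy _; apply: cl_y.
Qed.

Lemma sub_closure (S : {set I}) : S \subset closure S.
Proof. by apply/subsetP=> x xS; apply/closureP; left. Qed.

Lemma closure_sub (S T : {set I}) : S \subset closure T -> closure S \subset closure T.
Proof.
move=> /subsetP ST; apply/subsetP; elim/height_ind=> x IH /closureP[/ST // | [hx0 cl_y]].
by apply/closureP; right; split=> // y xy; apply/IH/cl_y.
Qed.

Lemma closure_in_compl (A B : {set I}) x : closure B \subset closure A ->
  x \in closure_in (~: closure B) A <-> x \in closure A /\ x \notin closure B.
Proof.
move=> /subsetP BA; elim/height_ind: x => x IH; rewrite closure_inP inE.
split=> [[xB [xA | [hx0 cl_y]]] | [/closureP[xA | [hx0 cl_y]] xB]].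
- by split=> //; apply/closureP; left.
- split=> //; apply/closureP; right; split=> // y xy.
  have [/BA // | yB] := boolP (y \in closure B).
  by have [] := (IH y xy).1 (cl_y y xy _); rewrite inE.
- by split=> //; left.
split=> //; right; split=> // y xy; rewrite inE => yB.
by apply/(IH y xy); split=> //; apply: cl_y.
Qed.

Lemma closure_split (A B : {set I}) x : closure B \subset closure A ->
  (x \in closure A : nat) = ((x \in closure B) + (x \in closure_in (~: closure B) A))%N.
Proof.
move=> BA; have /subsetP BA' := BA; have compl := closure_in_compl x BA.
case: (boolP (x \in closure_in _ _)) => [/compl[-> /negbTE ->] // | xC].
case: (boolP (x \in closure B)) => [/BA' -> // | xB].
by case: (boolP (x \in closure A)) => // xA; case/negP: xC; apply/compl.
Qed.

Lemma subset_closure0 (X S : {set I}) : {in X, forall x, h x = 0%N} ->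
  (X \subset closure S) = (X \subset S).
Proof.
move=> hX0; apply/subsetP/subsetP=> XS x xX; last by apply/closureP; left; apply: XS.
by case/closureP: (XS x xX) => // -[]; rewrite hX0.
Qed.

Lemma subset_closure_down (X Y S : {set I}) :
  {in X, forall x, 0 < h x /\ down x = Y}%N ->
  (X \subset closure S) = (X \subset S) || (Y \subset closure S).
Proof.
move=> downX; apply/idP/orP=> [XS | [/subsetP XS | /subsetP YS]]; last 2 first.
- by apply/subsetP=> x /XS xS; apply/closureP; left.
- apply/subsetP=> x xX; apply/closureP; right; have [hx0 dx] := downX x xX.
  by split=> // y; rewrite -mem_down dx => /YS.
have [|] := boolP (X \subset S); [by left | case/subsetPn=> x xX xS; right].
have [_ <-] := downX x xX; apply/subsetP=> y; rewrite mem_down.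
case/closureP: (subsetP XS x xX) => [xS' | [_ cl_y]]; last exact: cl_y.
by rewrite xS' in xS.
Qed.

Lemma ramified_height_gt0 x : ramified E h x -> (0 < h x)%N.
Proof.
by move/ltnW; rewrite card_gt0 => /set0Pn[y]; rewrite mem_down => /covers_height ->.
Qed.

Lemma RamP r : reflect (exists2 j, ramified E h j &
    r = [set k | ramified E h k & down k == down j]) (r \in Ram E h).
Proof.
apply: (iffP imsetP) => [[j] | [j rj ->]]; last by exists j; rewrite ?inE.
by rewrite inE => rj ->; exists j.
Qed.

Lemma rminus_class j : ramified E h j ->
  rminus E h [set k | ramified E h k & down k == down j] = down j.
Proof.
move=> rj; apply/setP=> y; apply/bigcupP/idP => [[k] | yj].
  by rewrite inE => /andP[_ /eqP ->].
by exists j; rewrite // inE rj eqxx.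
Qed.

Lemma closure_Ram_sub r : r \in Ram E h ->
  closure r \subset closure (rminus E h r).
Proof.
case/RamP=> j rj ->; rewrite rminus_class //; apply: closure_sub.
apply/subsetP=> k; rewrite inE => /andP[rk /eqP dk]; apply/closureP; right.
split; first exact: ramified_height_gt0.
by move=> y; rewrite -mem_down dk => yj; apply/closureP; left.
Qed.

Lemma sum_subset_Ram (X : {set I}) x0 : x0 \in X -> {in X, forall x, down x = down x0} ->
  (\sum_(r in Ram E h) (X \subset r) = ramified E h x0)%N.
Proof.
move=> x0X dX; pose r0 := [set k | ramified E h k & down k == down x0].
have subX r j : r = [set k | ramified E h k & down k == down j] ->
    (X \subset r) = ramified E h x0 && (r == r0).
  move=> ->; apply/subsetP/andP=> [sub | [rx0 /eqP ->] x xX].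
    have /sub := x0X; rewrite inE => /andP[rx0 /eqP dj]; split=> //.
    by apply/eqP/setP=> k; rewrite !inE dj.
  by rewrite inE /ramified !dX // eqxx andbT.
case rx0: (ramified E h x0).
  have r0R : r0 \in Ram E h by apply/RamP; exists x0.
  rewrite (bigD1 r0) //= (subX r0 x0) // rx0 eqxx big1 // => r /andP[/RamP[j _ rE] rr0].
  by rewrite (subX r j) // rx0 (negbTE rr0).
by rewrite big1 // => r /RamP[j _ rE]; rewrite (subX r j) // rx0.
Qed.

Lemma Ram_height r : r \in Ram E h -> {in r &, forall x y, h x = h y}.
Proof.
case/RamP=> j rj -> x y; rewrite !inE => /andP[_ /eqP dx] /andP[_ /eqP dy].
move: (rj) => /ltnW; rewrite card_gt0 => /set0Pn[z jz].
by move: (jz) (jz); rewrite -{1}dx -dy !mem_down => /covers_height -> /covers_height ->.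
Qed.

Lemma rminus_neq0 r : r \in Ram E h -> rminus E h r != set0.
Proof. by case/RamP=> j rj ->; rewrite rminus_class // -card_gt0 ltnW. Qed.

Lemma closure_set1_neq0 i : closure [set i] != set0.
Proof. by apply/set0Pn; exists i; apply/(subsetP (sub_closure _)); rewrite in_set1. Qed.

Lemma closure_rminus_neq0 r : r \in Ram E h -> closure (rminus E h r) != set0.
Proof.
by move/rminus_neq0/set0Pn=> [y yr]; apply/set0Pn; exists y; apply/(subsetP (sub_closure _)).
Qed.

End Closure.

Section Shrub.
Variables (I : finType) (E : rel I) (h : I -> nat).
Hypothesis shrubP : is_shrub E h.

Local Notation covers := (covers E h).
Local Notation down := (down E h).
Local Notation Ram := (Ram E h).
Local Notation rminus := (rminus E h).
Local Notation closure_in := (closure_in E h).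
Local Notation closure := (Defs.closure E h).

Lemma exists_covered j : (0 < h j)%N -> exists i, covers j i.
Proof. by case: shrubP => _ _ covered _ _; apply: covered. Qed.

Lemma closure_height_ge S y : y \in closure S -> exists2 s, s \in S & (h s <= h y)%N.
Proof.
elim/(@height_ind _ E h): y => y IH /closureP[yS | [hy0 cl_z]]; first by exists y.
have [z yz] := exists_covered hy0; have [s sS hs] := IH z yz (cl_z z yz).
by exists s; rewrite // (covers_height yz) (leq_trans hs).
Qed.

Lemma down_sibling x y y' : covers x y -> covers x y' -> down y = down y'.
Proof.
suff sub z z' : covers x z -> covers x z' -> down z \subset down z'.
  by move=> xy xy'; apply/eqP; rewrite eqEsubset !sub.
move=> xz xz'; apply/subsetP=> d; rewrite !mem_down => zd.
have [<- // | zz'] := eqVneq z z'.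
have hxz := covers_height xz; have hxz' := covers_height xz'.
have hzd := covers_height zd.
have neq_h u v : h u != h v -> u != v by apply: contraNneq => ->.
have uniq_xz'zd : uniq [:: x; z'; z; d].
  by rewrite /= !inE !negb_or (eq_sym z') zz' !neq_h //; lia.
case: shrubP => [[symE _] _ _ ax3 _]; have := ax3 _ _ _ _ uniq_xz'zd xz' xz zd.
by rewrite /covers symE => ->; apply/eqP; lia.
Qed.

Lemma rminus_notin_closure r : r \in Ram -> {in rminus r, forall y, y \notin closure r}.
Proof.
case/RamP=> j rj -> y; rewrite rminus_class // => jy.
apply/negP=> /closure_height_ge[k]; rewrite inE => /andP[_ /eqP dk].
by move: jy; rewrite -dk mem_down => /covers_height ->; rewrite ltnn.
Qed.

Lemma subset_closure_step m (X S : {set I}) x0 :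
  x0 \in X -> {in X, forall x, h x = m.+1 /\ down x = down x0} ->
  (X \subset S -> {in S, forall s, h s = m.+1}) ->
  ((X \subset closure S : nat) = (X \subset S) + (down x0 \subset closure S))%N.
Proof.
move=> x0X levX levS; have [hx0 _] := levX x0 x0X.
rewrite (@subset_closure_down _ _ _ _ (down x0)) => [|x xX]; last first.
  by have [-> ->] := levX x xX.
case: (boolP (X \subset S)) => //= XS.
have [y x0y] : exists y, covers x0 y by apply: exists_covered; rewrite hx0.
case: (boolP (down x0 \subset closure S)) => // /subsetP/(_ y).
rewrite mem_down => /(_ x0y) /closure_height_ge[s /(levS XS) ->].
by move: (covers_height x0y); rewrite hx0; lia.
Qed.

Definition cover_count (X : {set I}) : nat :=
  (\sum_(i : I) (X \subset closure [set i]) + \sum_(r in Ram) (X \subset closure r))%N.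

Lemma cover_count_level m (X : {set I}) : X != set0 -> {in X, forall x, h x = m} ->
  {in X &, forall x x', down x = down x'} -> cover_count X = (m + (#|X| == 1))%N.
Proof.
elim: m X => [|m IH] X /[dup] X0 /set0Pn[x0 x0X] hX dX; rewrite /cover_count.
  under eq_bigr do rewrite subset_closure0 //.
  under [X in (_ + X)%N]eq_bigr do rewrite subset_closure0 //.
  rewrite sum_subset1 // (sum_subset_Ram x0X) => [|x xX]; last exact: dX.
  by case: (boolP (ramified E h x0)) => [/ramified_height_gt0 | _]; rewrite ?(hX x0 x0X) ?addn0.
have levX : {in X, forall x, h x = m.+1 /\ down x = down x0}.
  by move=> x xX; rewrite hX // (dX x x0).
have [y0 x0y0] : exists y, covers x0 y by apply: exists_covered; rewrite hX.
have Y0 : down x0 != set0 by apply/set0Pn; exists y0; rewrite mem_down.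
have hY : {in down x0, forall y, h y = m}.
  by move=> y; rewrite mem_down => /covers_height; rewrite hX // => -[].
have dY : {in down x0 &, forall y y', down y = down y'}.
  by move=> y y'; rewrite !mem_down; apply: down_sibling.
have step_set1 i : (X \subset closure [set i] : nat) =
    ((X \subset [set i]) + (down x0 \subset closure [set i]))%N.
  apply: (subset_closure_step x0X levX) => /subsetP XS s; rewrite in_set1 => /eqP ->.
  by move: (XS x0 x0X); rewrite in_set1 => /eqP <-; apply: hX.
have step_Ram r : r \in Ram -> (X \subset closure r : nat) =
    ((X \subset r) + (down x0 \subset closure r))%N.
  move=> rR; apply: (subset_closure_step x0X levX) => /subsetP XS s sr.
  by rewrite (Ram_height rR sr (XS x0 x0X)) hX.
rewrite (eq_bigr _ (fun i _ => step_set1 i)) (eq_bigr _ step_Ram) !big_split /=.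
rewrite sum_subset1 // (sum_subset_Ram x0X) => [|x xX]; last by have [] := levX x xX.
rewrite addnACA; have := IH _ Y0 hY dY; rewrite /cover_count => ->.
(* exactly one of [#|down x0| == 1] and [ramified E h x0] holds *)
rewrite /ramified; move: Y0; rewrite -card_gt0.
by case: #|down x0| => [|[|k]] //= _; lia.
Qed.

Lemma closure_in_rminus_neq0 r : r \in Ram ->
  closure_in (~: closure r) (rminus r) != set0.
Proof.
move=> rR; have /set0Pn[y yr] := rminus_neq0 rR.
apply/set0Pn; exists y; apply/closure_inP; split; last by left.
by rewrite inE rminus_notin_closure.
Qed.

Lemma closure_count k :
  (\sum_(i : I) (k \in closure [set i]) + \sum_(r in Ram) (k \in closure (rminus r)))%N =
  ((h k).+1 + \sum_(r in Ram) (k \in closure_in (~: closure r) (rminus r)))%N.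
Proof.
rewrite (eq_bigr _ (fun r rR => closure_split k (closure_Ram_sub rR))) big_split /= addnA.
have := @cover_count_level (h k) [set k]; rewrite /cover_count cards1 eqxx addn1.
under eq_bigr do rewrite sub1set; under [X in (_ + X)%N]eq_bigr do rewrite sub1set.
move=> -> //; first by apply/set0Pn; exists k; rewrite in_set1.
  by move=> x /set1P ->.
by move=> x y /set1P -> /set1P ->.
Qed.

End Shrub.

Section Specialization.
Local Open Scope ring_scope.
Variable I : finType.

Definition usum_poly (S : {set I}) : {mpoly rat[#|I|]} := \sum_(k in S) 'X_(enum_rank k).

Lemma usumE (S : {set I}) : usum S = tofrac (usum_poly S).
Proof. by rewrite /usum /uvar /usum_poly rmorph_sum. Qed.

(* The [idomainType] cast gives the [size] of a specialization the ring instance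
   used by [size_mul], so that [lia] identifies the resulting atoms. *)
Definition spec_at (k : I) : {mpoly rat[#|I|]} -> {poly (rat : idomainType)} :=
  mmap polyC (fun i => if i == enum_rank k then 'X else 1).

Lemma spec_atM k : {morph spec_at k : p q / p * q}.
Proof. exact: rmorphM. Qed.

Lemma spec_at_sum k (S : {set I}) (F : I -> {mpoly rat[#|I|]}) :
  spec_at k (\sum_(i in S) F i) = \sum_(i in S) spec_at k (F i).
Proof. exact: raddf_sum. Qed.

Lemma spec_at_prod k (J : finType) (P : pred J) (F : J -> {mpoly rat[#|I|]}) :
  spec_at k (\prod_(j | P j) F j) = \prod_(j | P j) spec_at k (F j).
Proof. exact: rmorph_prod. Qed.

Lemma spec_at_uvar k i : spec_at k 'X_(enum_rank i) = if i == k then 'X else 1.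
Proof. by rewrite /spec_at mmapX mmap1U (inj_eq enum_rank_inj). Qed.

Lemma size_spec_at_usum k (S : {set I}) : S != set0 ->
  size (spec_at k (usum_poly S)) = (k \in S).+1.
Proof.
move=> S0; rewrite /usum_poly spec_at_sum.
under eq_bigr do rewrite spec_at_uvar.
have [kS | kNS] := boolP (k \in S).
  rewrite (bigD1 k) //= eqxx (eq_bigr (fun=> (1 : rat)%:P)) => [|i /andP[_ /negbTE ->] //].
  by rewrite -rmorph_sum size_XaddC.
rewrite (eq_bigr (fun=> (1 : rat)%:P)) => [|i iS]; last by case: eqP iS kNS => // ->  ->.
by rewrite -rmorph_sum size_polyC sumr_const pnatr_eq0 -lt0n card_gt0 S0.
Qed.

Lemma size_spec_at_prod k (J : finType) (P : pred J) (S : J -> {set I}) :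
  (forall j, P j -> S j != set0) ->
  size (spec_at k (\prod_(j | P j) usum_poly (S j))) = (\sum_(j | P j) (k \in S j)).+1%N.
Proof.
move=> S0; rewrite spec_at_prod size_prod => [|j /S0 Sj0]; last first.
  by rewrite -size_poly_gt0 size_spec_at_usum.
rewrite (eq_bigr (fun j => (k \in S j) + 1)%N) => [|j /S0 Sj0]; last first.
  by rewrite size_spec_at_usum // addn1.
by rewrite big_split /= sum1_card -addSn addnK.
Qed.

Lemma usum_poly_neq0 (S : {set I}) : S != set0 -> usum_poly S != 0.
Proof.
move=> /[dup] S0 /set0Pn[k _]; apply/eqP=> S_0.
by have := size_spec_at_usum k S0; rewrite S_0 /spec_at rmorph0 size_poly0.
Qed.

Definition fP_num (E : rel I) (h : I -> nat) : {mpoly rat[#|I|]} :=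
  \prod_(r in Ram E h) usum_poly (closure_in E h (~: Defs.closure E h r) (rminus E h r)).

Definition fP_den (E : rel I) (h : I -> nat) : {mpoly rat[#|I|]} :=
  (\prod_(i : I) usum_poly (Defs.closure E h [set i])) *
  \prod_(r in Ram E h) usum_poly (Defs.closure E h (rminus E h r)).

Lemma fPE E h : fP E h = tofrac (fP_num E h) / tofrac (fP_den E h).
Proof.
rewrite /fP /fP_num /fP_den.
under eq_bigr do rewrite usumE; under [X in _ * X]eq_bigr do rewrite !usumE.
by rewrite rmorphM !rmorph_prod prodfV big_split /= prodfV invfM mulrCA.
Qed.

Lemma fP_den_neq0 (E : rel I) (h : I -> nat) : fP_den E h != 0.
Proof.
apply: mulf_neq0; apply/prodf_neq0 => x xP; apply: usum_poly_neq0.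
  exact: closure_set1_neq0.
exact: closure_rminus_neq0.
Qed.

Lemma fP_cross (E E' : rel I) (h h' : I -> nat) :
  fP E h = fP E' h' -> fP_num E h * fP_den E' h' = fP_num E' h' * fP_den E h.
Proof.
move/eqP; rewrite !fPE eqr_div ?tofrac_eq0 ?fP_den_neq0 //.
by rewrite -!rmorphM tofrac_eq => /eqP.
Qed.

Lemma size_spec_at_den (E : rel I) (h : I -> nat) k : is_shrub E h ->
  size (spec_at k (fP_den E h)) = ((h k).+1 + size (spec_at k (fP_num E h)))%N.
Proof.
move=> shrubP; have cl_set1 i (_ : predT i) := closure_set1_neq0 E h i.
have cl_rminus := @closure_rminus_neq0 _ E h.
have clin_rminus := closure_in_rminus_neq0 shrubP.
rewrite spec_atM size_mul -?size_poly_gt0 !size_spec_at_prod //.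
by have := closure_count shrubP k; lia.
Qed.

Lemma spec_at_num_neq0 (E : rel I) (h : I -> nat) k : is_shrub E h ->
  spec_at k (fP_num E h) != 0.
Proof.
move=> shrubP; rewrite -size_poly_gt0 size_spec_at_prod // => r.
exact: closure_in_rminus_neq0.
Qed.

Lemma spec_at_den_neq0 (E : rel I) (h : I -> nat) k : is_shrub E h ->
  spec_at k (fP_den E h) != 0.
Proof. by move=> shrubP; rewrite -size_poly_gt0 size_spec_at_den. Qed.

End Specialization.

Theorem mainTheorem14 (I : finType) (E : rel I) (h : I -> nat)
    (E' : rel I) (h' : I -> nat) :
  is_shrub E h -> is_shrub E' h' -> fP E h = fP E' h' -> h =1 h'.
Proof.
move=> shrubP shrubP' /fP_cross cross k.
move/(congr1 (fun p => size (spec_at k p))): cross.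
rewrite !(spec_atM _ (fP_num _ _)) !size_mul ?spec_at_num_neq0 ?spec_at_den_neq0 //.
by rewrite !size_spec_at_den //; lia.
Qed.
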